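(* In the virtually-$\mathbb{Z}$ setting described in the context, for every $s\in G$ the quantity $\mathrm{imp}_k(s)=\max\{|p(gs)-p(g)| : g\in V_{\{k\}}\}$ does not depend on $k\in\mathbb{Z}$.
   Context: $G$ is a finitely generated group, $H\leq G$ a subgroup of finite index and $\varphi:H\to\mathbb{Z}$ a group isomorphism. $F\subseteq G$ is a finite set with $1_G\in F$ containing exactly one element of each right coset $Hg$, so every $g\in G$ decomposes uniquely as $g=zf$ with $z\in H$, $f\in F$. Define $p:G\to\mathbb{Z}$ by $p(zf)=\varphi(z)$. For $k\in\mathbb{Z}$, the $k$-th vertebra is $V_{\{k\}}=p^{-1}(\{k\})$ (a finite set). *)

From Stdlib Require Import ZArith List.
Open Scope Z_scope.

Definition is_group {G : Type} (mul : G -> G -> G) (one : G) (inv : G -> G)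
  : Prop :=
  (forall x y z, mul x (mul y z) = mul (mul x y) z) /\
  (forall x, mul one x = x) /\ (forall x, mul x one = x) /\
  (forall x, mul (inv x) x = one) /\ (forall x, mul x (inv x) = one).

Definition is_subgroup {G : Type} (mul : G -> G -> G) (one : G)
  (inv : G -> G) (H : G -> Prop) : Prop :=
  H one /\ (forall x y, H x -> H y -> H (mul x y)) /\
  (forall x, H x -> H (inv x)).

Inductive generated {G : Type} (mul : G -> G -> G) (one : G) (inv : G -> G)
  (S : list G) : G -> Prop :=
| gen_base : forall s, In s S -> generated mul one inv S s
| gen_one : generated mul one inv S one
| gen_mul : forall x y, generated mul one inv S x ->
    generated mul one inv S y -> generated mul one inv S (mul x y)
| gen_inv : forall x, generated mul one inv S x ->
    generated mul one inv S (inv x).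

Definition finitely_generated {G : Type} (mul : G -> G -> G) (one : G)
  (inv : G -> G) : Prop :=
  exists S : list G, forall g, generated mul one inv S g.

(* phi restricted to H is a group isomorphism H -> Z (values of phi
   outside H are irrelevant). *)
Definition is_iso_to_Z {G : Type} (mul : G -> G -> G) (H : G -> Prop)
  (phi : G -> Z) : Prop :=
  (forall x y, H x -> H y -> phi (mul x y) = phi x + phi y) /\
  (forall x y, H x -> H y -> phi x = phi y -> x = y) /\
  (forall n : Z, exists z, H z /\ phi z = n).

Definition finite_index {G : Type} (mul : G -> G -> G) (inv : G -> G)
  (H : G -> Prop) : Prop :=
  exists L : list G, forall g, exists c, In c L /\ H (mul g (inv c)).

Definition right_transversal {G : Type} (mul : G -> G -> G) (H : G -> Prop)
  (F : list G) : Prop :=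
  forall g, exists z f, H z /\ In f F /\ g = mul z f /\
    forall z' f', H z' -> In f' F -> g = mul z' f' -> z' = z /\ f' = f.

Definition is_max_on {G : Type} (P : G -> Prop) (f : G -> Z) (m : Z) : Prop :=
  (exists g, P g /\ f g = m) /\ (forall g, P g -> f g <= m).

Definition vertebra {G : Type} (p : G -> Z) (k : Z) : G -> Prop :=
  fun g => p g = k.

(* Left multiplication by z in H shifts p by phi z, so it maps the vertebra
   V_k onto V_(k + phi z) and leaves the displacement |p(g s) - p(g)|
   unchanged.  Hence on every vertebra the displacement takes exactly the
   values it takes on the finite transversal F, and its maximum is the
   maximum over F. *)
From Stdlib Require Import ZArith List Lia.
Open Scope Z_scope.

Lemma In_argmax {A : Type} (f : A -> Z) {a : A} {l : list A} :
  In a l -> exists x, In x l /\ forall y, In y l -> f y <= f x.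
Proof.
  revert a; induction l as [|b l IH]; intros a Ha; [destruct Ha|].
  destruct l as [|c l].
  - exists b; split; [now left|].
    intros y [<-|[]]; lia.
  - destruct (IH c (or_introl eq_refl)) as [x [Hx Hmax]].
    destruct (Z_le_gt_dec (f b) (f x)).
    + exists x; split; [now right|].
      intros y [<-|Hy]; [lia|auto].
    + exists b; split; [now left|].
      intros y [<-|Hy]; [lia|specialize (Hmax y Hy); lia].
Qed.

Section Vertebrae.

Variables (G : Type) (mul : G -> G -> G).
Hypothesis mulA : forall x y z, mul x (mul y z) = mul (mul x y) z.

Variables (H : G -> Prop) (phi : G -> Z) (F : list G) (p : G -> Z).
Hypothesis H_mul : forall x y, H x -> H y -> H (mul x y).
Hypothesis phi_mul : forall x y, H x -> H y -> phi (mul x y) = phi x + phi y.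
Hypothesis phi_surj : forall n : Z, exists z, H z /\ phi z = n.
Hypothesis F_transversal : right_transversal mul H F.
Hypothesis p_decomp : forall z f, H z -> In f F -> p (mul z f) = phi z.

Lemma p_mulH (z x : G) : H z -> p (mul z x) = phi z + p x.
Proof.
  intros Hz.
  destruct (F_transversal x) as [z' [f [Hz' [Hf [-> _]]]]].
  rewrite mulA, !p_decomp; auto.
Qed.

Definition displacement (s g : G) : Z := Z.abs (p (mul g s) - p g).

Lemma displacement_mulH (s z g : G) :
  H z -> displacement s (mul z g) = displacement s g.
Proof.
  intros Hz; unfold displacement.
  rewrite <- mulA, (p_mulH z (mul g s) Hz), (p_mulH z g Hz).
  apply f_equal; lia.
Qed.

Lemma displacement_transversal (s g : G) :
  exists f, In f F /\ displacement s g = displacement s f.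
Proof.
  destruct (F_transversal g) as [z [f [Hz [Hf [-> _]]]]].
  exists f; split; [exact Hf|].
  now apply displacement_mulH.
Qed.

Lemma max_displacement_vertebra (s f0 : G) (k : Z) :
  In f0 F -> (forall f, In f F -> displacement s f <= displacement s f0) ->
  is_max_on (vertebra p k) (displacement s) (displacement s f0).
Proof.
  intros Hf0 Hmax; split.
  - destruct (phi_surj k) as [z [Hz <-]].
    exists (mul z f0); split.
    + now apply p_decomp.
    + now apply displacement_mulH.
  - intros g _.
    destruct (displacement_transversal s g) as [f [Hf ->]].
    now apply Hmax.
Qed.

End Vertebrae.

Arguments displacement {G} mul p s g.
Arguments max_displacement_vertebra {G mul} mulA {H phi F p}.

Theorem proposition3
  (G : Type) (mul : G -> G -> G) (one : G) (inv : G -> G)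
  (HG : is_group mul one inv)
  (Hfg : finitely_generated mul one inv)
  (H : G -> Prop) (HH : is_subgroup mul one inv H)
  (Hidx : finite_index mul inv H)
  (phi : G -> Z) (Hphi : is_iso_to_Z mul H phi)
  (F : list G) (HF1 : In one F) (HF : right_transversal mul H F)
  (p : G -> Z)
  (Hp : forall z f, H z -> In f F -> p (mul z f) = phi z) :
  forall s : G, exists m : Z, forall k : Z,
    is_max_on (vertebra p k) (fun g => Z.abs (p (mul g s) - p g)) m.
Proof.
  destruct HG as [mulA _].
  destruct HH as [_ [H_mul _]].
  destruct Hphi as [phi_mul [_ phi_surj]].
  intros s.
  destruct (In_argmax (displacement mul p s) HF1) as [f0 [Hf0 Hmax]].
  exists (displacement mul p s f0); intros k.
  now apply (max_displacement_vertebra mulA H_mul phi_mul phi_surj HF Hp).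
Qed.
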